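(* Let $M$ be a multigraph with $n$ vertices. Then $M$ is the double competition multigraph of some digraph (loops allowed) if and only if there exist an ordering $(v_1,\ldots,v_n)$ of the vertices of $M$ and a double indexed edge clique partition $\{S_{ij} \mid i,j\in[n]\}$ of $M$ such that the following condition holds: (I) for any $i,j\in[n]$, if $|A_i\cap B_j|\ge 2$, then $A_i\cap B_j = S_{ij}$, where $A_i = S_{i*}\cup T^+_i$, $S_{i*} := \bigcup_{p\in[n]} S_{ip}$, $T^+_i := \{v_b \mid a,b\in[n],\ v_i\in S_{ab}\}$, and $B_j = S_{*j}\cup T^-_j$, $S_{*j} := \bigcup_{q\in[n]} S_{qj}$, $T^-_j := \{v_a \mid a,b\in[n],\ v_j\in S_{ab}\}$.
   Context: A digraph $D$ is a pair $(V(D),A(D))$ with $A(D)$ a set of ordered pairs of vertices (arcs); an arc $(v,v)$ is a loop. $N^+_D(x)=\{v\mid (x,v)\in A(D)\}$ and $N^-_D(x)=\{v\mid (v,x)\in A(D)\}$. A multigraph $M$ (without loops) is a vertex set $V(M)$ together with a function $m_M$ assigning to each unordered pair $\{x,y\}$ of distinct vertices a nonnegative integer, the number of edges between $x$ and $y$. The double competition multigraph of a digraph $D$ is the multigraph $M$ with $V(M)=V(D)$ and $m_M(\{x,y\}) = |N^+_D(x)\cap N^+_D(y)|\cdot|N^-_D(x)\cap N^-_D(y)|$ for distinct $x,y$. A clique of $M$ is a set of vertices that are pairwise adjacent (i.e. $m_M\ge 1$ on every pair of distinct elements); the empty set and singletons count as cliques. An edge clique partition of $M$ is a family (multiset) $\mathcal{F}$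 of cliques of $M$ such that any two distinct vertices $x,y$ are contained in exactly $m_M(\{x,y\})$ members of $\mathcal{F}$; a double indexed edge clique partition $\{S_{ij}\mid i,j\in[n]\}$ is such a family indexed by pairs $(i,j)\in[n]\times[n]$ (members may be empty). $[n]=\{1,\ldots,n\}$. *)

From mathcomp Require Import all_boot.
Set Implicit Arguments. Unset Strict Implicit. Unset Printing Implicit Defensive.

(* A multigraph on a finite vertex type V is a symmetric function
   m : V -> V -> nat; only values on pairs of distinct vertices matter. *)
Definition multigraph (V : finType) (m : V -> V -> nat) : Prop :=
  forall x y, m x y = m y x.

Definition out_nbhd (V : finType) (D : rel V) (x : V) : {set V} :=
  [set v | D x v].
Definition in_nbhd (V : finType) (D : rel V) (x : V) : {set V} :=
  [set v | D v x].

Definition is_dcm (V : finType) (D : rel V) (m : V -> V -> nat) : Prop :=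
  forall x y, x != y ->
    m x y = #|out_nbhd D x :&: out_nbhd D y| * #|in_nbhd D x :&: in_nbhd D y|.

Definition is_clique (V : finType) (m : V -> V -> nat) (S : {set V}) : Prop :=
  forall x y, x \in S -> y \in S -> x != y -> 1 <= m x y.

Definition double_indexed_ecp (V : finType) (n : nat) (m : V -> V -> nat)
    (S : 'I_n -> 'I_n -> {set V}) : Prop :=
  (forall i j, is_clique m (S i j)) /\
  (forall x y, x != y ->
     #|[set p : 'I_n * 'I_n | (x \in S p.1 p.2) && (y \in S p.1 p.2)]| = m x y).

Definition Srow (V : finType) (n : nat) (S : 'I_n -> 'I_n -> {set V}) (i : 'I_n)
  : {set V} := \bigcup_(p : 'I_n) S i p.
Definition Scol (V : finType) (n : nat) (S : 'I_n -> 'I_n -> {set V}) (j : 'I_n)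
  : {set V} := \bigcup_(q : 'I_n) S q j.

Definition Tplus (V : finType) (n : nat) (v : 'I_n -> V)
    (S : 'I_n -> 'I_n -> {set V}) (i : 'I_n) : {set V} :=
  [set v b | b : 'I_n & [exists a : 'I_n, v i \in S a b]].
Definition Tminus (V : finType) (n : nat) (v : 'I_n -> V)
    (S : 'I_n -> 'I_n -> {set V}) (j : 'I_n) : {set V} :=
  [set v a | a : 'I_n & [exists b : 'I_n, v j \in S a b]].

Definition Aset (V : finType) (n : nat) (v : 'I_n -> V)
    (S : 'I_n -> 'I_n -> {set V}) (i : 'I_n) : {set V} :=
  Srow S i :|: Tplus v S i.
Definition Bset (V : finType) (n : nat) (v : 'I_n -> V)
    (S : 'I_n -> 'I_n -> {set V}) (j : 'I_n) : {set V} :=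
  Scol S j :|: Tminus v S j.

Definition condition_I (V : finType) (n : nat) (v : 'I_n -> V)
    (S : 'I_n -> 'I_n -> {set V}) : Prop :=
  forall i j : 'I_n, 2 <= #|Aset v S i :&: Bset v S j| ->
    Aset v S i :&: Bset v S j = S i j.

From mathcomp Require Import all_boot.

(* A digraph D with vertices enumerated as v_1, ..., v_n yields the partition
   S_ij = N^+(v_i) ∩ N^-(v_j): a pair {x, y} lies in S_ij exactly when v_i is a
   common in-neighbour and v_j a common out-neighbour of x and y, so counting
   the pairs (i, j) gives the double competition multiplicity. Conversely, the
   sets A_i and B_j of a partition always satisfy v_j ∈ A_i <-> v_i ∈ B_j, so
   declaring A_i to be the out-neighbourhood of v_i defines a digraph whose
   in-neighbourhoods are the B_j; condition (I) says precisely that S_ij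
   contains every pair of A_i ∩ B_j, which makes the counts agree again. *)

Set Implicit Arguments.
Unset Strict Implicit.
Unset Printing Implicit Defensive.

Lemma card_common_nbhd_pairs (V I : finType) (D : rel V) (v : I -> V) (x y : V) :
  bijective v ->
  #|[set p : I * I | (v p.1 \in in_nbhd D x :&: in_nbhd D y)
                     && (v p.2 \in out_nbhd D x :&: out_nbhd D y)]|
  = #|out_nbhd D x :&: out_nbhd D y| * #|in_nbhd D x :&: in_nbhd D y|.
Proof.
move=> bij_v; have card_pre (A : {set V}) : #|v @^-1: A| = #|A|.
  exact: on_card_preimset (onW_bij _ bij_v).
rewrite mulnC -!card_pre -cardsX; apply: eq_card => -[i j].
by rewrite !inE.
Qed.

Section NeighbourhoodPartition.

Variables (V : finType) (n : nat) (D : rel V) (v : 'I_n -> V).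

Definition nbhd_partition (i j : 'I_n) : {set V} :=
  out_nbhd D (v i) :&: in_nbhd D (v j).

Lemma mem_nbhd_partition i j x :
  (x \in nbhd_partition i j) = D (v i) x && D x (v j).
Proof. by rewrite !inE. Qed.

Lemma Aset_nbhd_partition i : Aset v nbhd_partition i \subset out_nbhd D (v i).
Proof.
apply/subsetP=> x; rewrite !inE => /orP[/bigcupP[j _]|/imsetP[b]].
  by rewrite mem_nbhd_partition => /andP[].
by rewrite inE => /existsP[a]; rewrite mem_nbhd_partition => /andP[_ ?] ->.
Qed.

Lemma Bset_nbhd_partition j : Bset v nbhd_partition j \subset in_nbhd D (v j).
Proof.
apply/subsetP=> x; rewrite !inE => /orP[/bigcupP[i _]|/imsetP[a]].
  by rewrite mem_nbhd_partition => /andP[].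
by rewrite inE => /existsP[b]; rewrite mem_nbhd_partition => /andP[? _] ->.
Qed.

Lemma sub_Aset_Bset (S : 'I_n -> 'I_n -> {set V}) i j :
  S i j \subset Aset v S i :&: Bset v S j.
Proof.
apply/subsetP=> x xS; rewrite !inE; apply/andP; split; apply/orP; left.
  by apply/bigcupP; exists j.
by apply/bigcupP; exists i.
Qed.

Lemma AsetI_Bset_nbhd_partition i j :
  Aset v nbhd_partition i :&: Bset v nbhd_partition j = nbhd_partition i j.
Proof.
apply/eqP; rewrite eqEsubset sub_Aset_Bset andbT.
exact: setISS (Aset_nbhd_partition i) (Bset_nbhd_partition j).
Qed.

Lemma condition_I_nbhd_partition : condition_I v nbhd_partition.
Proof. by move=> i j _; apply: AsetI_Bset_nbhd_partition. Qed.

Lemma nbhd_partition_ecp (m : V -> V -> nat) :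
  bijective v -> is_dcm D m -> double_indexed_ecp m nbhd_partition.
Proof.
move=> bij_v dcmD; split.
  move=> i j x y; rewrite !mem_nbhd_partition => /andP[ix xj] /andP[iy yj] xy.
  rewrite dcmD // muln_gt0; apply/andP; split; apply/card_gt0P.
    by exists (v j); rewrite !inE xj yj.
  by exists (v i); rewrite !inE ix iy.
move=> x y xy; rewrite dcmD // -(card_common_nbhd_pairs _ _ _ bij_v).
by apply: eq_card => -[i j]; rewrite !inE /= andbACA.
Qed.

End NeighbourhoodPartition.

Section PartitionDigraph.

Variables (V : finType) (n : nat) (v : 'I_n -> V) (w : V -> 'I_n).
Hypotheses (vK : cancel v w) (wK : cancel w v).
Variable S : 'I_n -> 'I_n -> {set V}.

Lemma mem_Aset_Bset i j : (v j \in Aset v S i) = (v i \in Bset v S j).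
Proof.
have v_inj := can_inj vK.
have mem_T (k : 'I_n) P : (v k \in [set v b | b : 'I_n & P b]) = P k.
  by rewrite mem_imset ?inE.
rewrite !inE !mem_T orbC; congr orb.
  by apply/existsP/bigcupP => [[a ?]|[a _ ?]]; exists a.
by apply/bigcupP/existsP => [[b _ ?]|[b ?]]; exists b.
Qed.

Definition partition_digraph : rel V := [rel x y | y \in Aset v S (w x)].

Lemma partition_digraph_out i y : partition_digraph (v i) y = (y \in Aset v S i).
Proof. by rewrite /partition_digraph /= vK. Qed.

Lemma partition_digraph_in j x : partition_digraph x (v j) = (x \in Bset v S j).
Proof. by rewrite /partition_digraph /= mem_Aset_Bset wK. Qed.

Lemma condition_I_pair i j x y : condition_I v S -> x != y ->
  (x \in S i j) && (y \in S i j) =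
  (x \in Aset v S i :&: Bset v S j) && (y \in Aset v S i :&: Bset v S j).
Proof.
move=> condI xy; apply/idP/idP => [/andP[xS yS]|/andP[xAB yAB]].
  by rewrite !(subsetP (sub_Aset_Bset v S i j)).
have two_in_AB : 2 <= #|Aset v S i :&: Bset v S j|.
  apply: leq_trans (subset_leq_card (_ : [set x; y] \subset _)).
    by rewrite cards2 xy.
  by apply/subsetP=> z; rewrite in_set2 => /orP[]/eqP->.
by rewrite -(condI i j two_in_AB) xAB.
Qed.

Lemma partition_digraph_dcm (m : V -> V -> nat) :
  double_indexed_ecp m S -> condition_I v S -> is_dcm partition_digraph m.
Proof.
move=> [_ count_pairs] condI x y xy.
rewrite -count_pairs // -(card_common_nbhd_pairs _ _ _ (Bijective vK wK)).
apply: eq_card => -[i j]; rewrite !inE /= condition_I_pair // !in_setI.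
by rewrite -!partition_digraph_out -!partition_digraph_in andbACA.
Qed.

End PartitionDigraph.

Theorem theorem1 (V : finType) (m : V -> V -> nat) :
  multigraph m ->
  (exists D : rel V, is_dcm D m) <->
  (exists (v : 'I_#|V| -> V) (S : 'I_#|V| -> 'I_#|V| -> {set V}),
     bijective v /\ double_indexed_ecp m S /\ condition_I v S).
Proof.
move=> _; split.
  move=> [D dcmD].
  have bij_v : bijective (@enum_val V predT).
    by exists enum_rank; [exact: enum_valK | exact: enum_rankK].
  exists enum_val, (nbhd_partition D enum_val).
  split; [done | split; [exact: nbhd_partition_ecp | exact: condition_I_nbhd_partition]].
move=> [v [S [[w vK wK] [ecpS condI]]]].
by exists (partition_digraph v w S); apply: partition_digraph_dcm.
Qed.
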